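(* For $n\ge 1$ let $p_n=\Psi(P_n)$, $m_n=\Psi(M_n)$, $o_n=\Psi(O_n)$, and set $p_0=m_0=o_0=1$. Let $P(x)=\sum_{n\ge0}p_nx^n$, $M(x)=\sum_{n\ge0}m_nx^n$, $O(x)=\sum_{n\ge0}o_nx^n$ be the ordinary generating functions. Then $$P(x)=\frac{1+4x^2}{1-5x+4x^2-4x^3},\qquad M(x)=\frac{1-x-2x^2}{1-6x+3x^2-2x^3},\qquad O(x)=\frac{1+x+x^2}{1-4x-4x^2-x^3}.$$
   Context: All graphs are finite and simple. A matching of a graph $G$ is a set of edges no two of which share a vertex; it is maximal if it is not a proper subset of another matching of $G$. $\Psi(G)$ denotes the number of maximal matchings of $G$ (the empty graph has exactly one, the empty matching). A hexagonal cactus is a connected graph in which every block is a 6-cycle (hexagon). A chain hexagonal cactus is a hexagonal cactus in which each hexagon contains at most two cut-vertices and each cut-vertex is shared by exactly two hexagons; its length is the number of hexagons. In a chain of length $\ge 2$, exactly two hexagons contain one cut-vertex (terminal hexagons); the others contain two (internal hexagons). An internal hexagon is an ortho-, meta- or para-hexagon according as its two cut-vertices are at distance 1, 2 or 3 in the hexagon. $P_n$, $M_n$, $O_n$ denote the (unique up to isomorphism) chain hexagonal cacti of length $n$ all of whose internal hexagons are para-, meta-, resp. ortho-hexagons (for $n\le 2$ these coincide). *)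

From HB Require Import structures.
From mathcomp Require Import all_boot all_order all_algebra.
Set Implicit Arguments. Unset Strict Implicit. Unset Printing Implicit Defensive.
Import GRing.Theory Num.Theory.

(* A (simple) graph is given by its list E of edges (pairs of nat vertices);
   the vertex set is the set of endpoints.  For the graphs below E has no repeated
   edge, so subsets of indices correspond bijectively to edge subsets. *)

Definition ends (E : seq (nat * nat)) (e : 'I_(size E)) : nat * nat :=
  nth (0, 0) E e.

Definition disjoint_edges (x y : nat * nat) : bool :=
  [&& x.1 != y.1, x.1 != y.2, x.2 != y.1 & x.2 != y.2].

Definition is_matching (E : seq (nat * nat)) (S : {set 'I_(size E)}) : bool :=
  [forall e in S, forall f in S, (e != f) ==> disjoint_edges (ends e) (ends f)].

Definition is_maximal_matching (E : seq (nat * nat)) (S : {set 'I_(size E)}) : bool :=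
  is_matching S && ~~ [exists T : {set 'I_(size E)}, is_matching T && (S \proper T)].

Definition Psi (E : seq (nat * nat)) : nat :=
  #|[set S : {set 'I_(size E)} | is_maximal_matching S]|.

(* Hexagon k (k = 0,1,...) consists of the attachment vertex a_k and the new
   vertices b,...,b+4 with b = 5k+1, forming the 6-cycle
   a_k - b - b+1 - b+2 - b+3 - b+4 - a_k  (a_k at position 0, b+j at position j+1).
   a_0 = 0, and a_(k+1) = 5k+d is the vertex at position d of hexagon k, so
   in every internal hexagon the two cut-vertices are at distance d
   (d = 1 ortho, 2 meta, 3 para). *)
Definition hexagon (d k : nat) : seq (nat * nat) :=
  let a := if k is k'.+1 then 5 * k' + d else 0 in
  let b := 5 * k + 1 in
  [:: (a, b); (b, b.+1); (b.+1, b.+2); (b.+2, b.+3); (b.+3, b.+4); (b.+4, a)].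

Definition hex_chain (d n : nat) : seq (nat * nat) :=
  flatten [seq hexagon d k | k <- iota 0 n].

Definition P_chain (n : nat) := hex_chain 3 n.
Definition M_chain (n : nat) := hex_chain 2 n.
Definition O_chain (n : nat) := hex_chain 1 n.

Definition p_seq (n : nat) : nat := if n is 0 then 1 else Psi (P_chain n).
Definition m_seq (n : nat) : nat := if n is 0 then 1 else Psi (M_chain n).
Definition o_seq (n : nat) : nat := if n is 0 then 1 else Psi (O_chain n).

Definition fps_mul_poly_coef (a : nat -> int) (D : {poly int}) (n : nat) : int :=
  (\sum_(i < n.+1) (D`_i)%R * a (n - i)%N)%R.

(* The formal power series A(x) = sum a_n x^n equals N(x)/D(x), D(0) = 1,
   i.e. A(x) * D(x) = N(x) coefficientwise. *)
Definition ogf_eq_ratio (a : nat -> int) (N D : {poly int}) : Prop :=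
  (D`_0)%R = 1%R /\ forall n : nat, fps_mul_poly_coef a D n = (N`_n)%R.

From mathcomp Require Import all_boot all_order all_algebra zify ring.
Import GRing.Theory.
Set Implicit Arguments. Unset Strict Implicit.

(* Cut the chain after each hexagon.  A selection of edges of the first k
   hexagons falls into one of four states relative to the cut vertex a_k shared
   with hexagon k+1 (see [state]); since hexagon k+1 meets the previous ones
   only in a_k, the state after adding it depends only on the previous state
   and on the selection inside the new hexagon.  So the numbers of selections in
   the three live states evolve by a fixed 3 x 3 transfer matrix (the dead state
   is absorbing), Psi is the sum of the first two of them, and by
   Cayley-Hamilton Psi satisfies the recurrence given by the characteristic
   polynomial of that matrix.  Its reversal is the denominator of the generating
   function; the numerator is read off from the first three values. *)


Fixpoint bool_seqs (m : nat) : seq (seq bool) :=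
  if m is m'.+1 then [seq b :: s | b <- [:: true; false], s <- bool_seqs m']
  else [:: [::]].

Lemma mem_bool_seqs m s : (s \in bool_seqs m) = (size s == m).
Proof.
elim: m s => [|m IH] [|b s] //.
- by apply/negP => /allpairsP [[? ?] [_ _]].
- rewrite [size _]/= eqSS -IH; apply/allpairsP/idP => [[[b' s'] /= [_ ? [_ ->]]] //|sm].
  by exists (b, s); case: b.
Qed.

Lemma uniq_bool_seqs m : uniq (bool_seqs m).
Proof. by elim: m => // m IH; apply: allpairs_uniq => // -[? ?] [? ?] _ _ [-> ->]. Qed.

Lemma count_sum T (P : pred T) r : count P r = \sum_(x <- r) P x.
Proof. by rewrite -sumn_count sumnE big_map. Qed.

Lemma sum_bool_seqs_cat m1 m2 (F : seq bool -> nat) :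
  \sum_(s <- bool_seqs (m1 + m2)) F s =
  \sum_(s1 <- bool_seqs m1) \sum_(s2 <- bool_seqs m2) F (s1 ++ s2).
Proof.
elim: m1 F => [|m1 IH] F; first by rewrite big_seq1.
have bool_seqsS k :
  bool_seqs k.+1 = [seq b :: s | b <- [:: true; false], s <- bool_seqs k] by [].
by rewrite addSn !bool_seqsS !big_allpairs_dep; apply: eq_bigr => b _; rewrite IH.
Qed.

Definition incident (v : nat) (e : nat * nat) : bool := (e.1 == v) || (e.2 == v).

(* A set of edges of E is encoded by its indicator sequence s, aligned with E. *)
Definition selected (E : seq (nat * nat)) (s : seq bool) : seq (nat * nat) :=
  [seq p.1 | p <- zip E s & p.2].

Definition covered E s (v : nat) : bool := has (incident v) (selected E s).

Definition dominated E s (e : nat * nat) : bool := covered E s e.1 || covered E s e.2.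

Definition matching_sel E s : bool := pairwise disjoint_edges (selected E s).

Definition dominating_sel E s : bool := all (dominated E s) E.

Definition maximal_sel E s : bool := matching_sel E s && dominating_sel E s.

Lemma disjoint_edges_sym : symmetric disjoint_edges.
Proof.
move=> x y; rewrite /disjoint_edges !(eq_sym x.1) !(eq_sym x.2).
by case: (_ == _) (_ == _) (_ == _) (_ == _) => [] [] [] [].
Qed.

Lemma disjoint_edgesE x y : disjoint_edges x y = ~~ incident x.1 y && ~~ incident x.2 y.
Proof.
rewrite /disjoint_edges /incident !(eq_sym y.1) !(eq_sym y.2).
by case: (_ == _) (_ == _) (_ == _) (_ == _) => [] [] [] [].
Qed.

Lemma pairwise_uniqP (T : eqType) (r : rel T) (l : seq T) : symmetric r -> uniq l ->
  reflect {in l &, forall x y, x != y -> r x y} (pairwise r l).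
Proof.
move=> r_sym; elim: l => [|a l IH] /=; first by move=> _; apply: ReflectT.
case/andP=> al ul; apply: (iffP andP).
- case=> /allP ra /(IH ul) rl x y; rewrite !inE => /orP [/eqP ->|xl] /orP [/eqP ->|yl];
  rewrite ?eqxx // => xy; [exact: ra | rewrite r_sym; exact: ra | exact: rl].
- move=> r_in; split.
  + apply/allP => y yl; apply: r_in; rewrite ?inE ?eqxx ?yl ?orbT //.
    by apply: contraNneq al => ->.
  + by apply/(IH ul) => x y xl yl; apply: r_in; rewrite inE ?xl ?yl orbT.
Qed.

Section MaximalMatchingsAsSelections.
Variable E : seq (nat * nat).
Local Notation m := (size E).

Definition indicator_seq (S : {set 'I_m}) : seq bool := [seq i \in S | i <- enum 'I_m].

Lemma map_ends_enum : [seq ends i | i <- enum 'I_m] = E.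
Proof.
rewrite /ends (map_comp (nth (0, 0) E) val) val_enum_ord.
by rewrite -[RHS](mkseq_nth (0, 0)).
Qed.

Lemma selected_indicator S :
  selected E (indicator_seq S) = [seq ends i | i <- enum 'I_m & i \in S].
Proof.
rewrite /selected /indicator_seq -{1}map_ends_enum zip_map filter_map -map_comp.
exact: eq_map.
Qed.

Lemma covered_indicator S v :
  covered E (indicator_seq S) v = [exists i in S, incident v (ends i)].
Proof.
rewrite /covered selected_indicator; apply/hasP/exists_inP.
- by case=> e /mapP [i]; rewrite mem_filter => /andP [iS _] -> ?; exists i.
- case=> i iS vi; exists (ends i) => //; apply/mapP; exists i => //.
  by rewrite mem_filter iS mem_enum.
Qed.

Lemma matching_indicator S : matching_sel E (indicator_seq S) = is_matching S.
Proof.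
have r_sym : symmetric (relpre (@ends E) disjoint_edges).
  by move=> x y; rewrite /= disjoint_edges_sym.
have uS : uniq [seq i <- enum 'I_m | i \in S] by rewrite filter_uniq // enum_uniq.
rewrite /is_matching /matching_sel selected_indicator pairwise_map.
apply/(pairwise_uniqP r_sym uS)/idP.
- move=> r_in; apply/forall_inP => e eS; apply/forall_inP => f fS; apply/implyP.
  by apply: r_in; rewrite mem_filter ?eS ?fS mem_enum.
- move=> /forall_inP mS x y; rewrite !mem_filter => /andP [xS _] /andP [yS _].
  by move: (mS x xS) => /forall_inP /(_ y yS) /implyP.
Qed.

Lemma dominating_indicator S : is_matching S ->
  dominating_sel E (indicator_seq S) = ~~ [exists T, is_matching T && (S \proper T)].
Proof.
move=> mS; rewrite /dominating_sel -{2}map_ends_enum all_map.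
have domE i : dominated E (indicator_seq S) (ends i) =
    [exists j in S, incident (ends i).1 (ends j)] ||
    [exists j in S, incident (ends i).2 (ends j)] by rewrite /dominated !covered_indicator.
apply/allP/negP => [dom /existsP [T /andP [mT /properP [sST [e eT eS]]]] | nomax i _].
- have [j jS ij] : exists2 j, j \in S & ~~ disjoint_edges (ends e) (ends j).
    move: (dom e (mem_enum _ e)); rewrite /= domE.
    by case/orP=> /exists_inP [j jS ij]; exists j; rewrite // disjoint_edgesE ij ?andbF.
  have je : e != j by apply: contraNneq eS => ->.
  case/negP: ij.
  by move: mT => /forall_inP /(_ e eT) /forall_inP /(_ j (subsetP sST j jS)) /implyP /(_ je).
- apply/negPn/negP; rewrite /= domE negb_or => /andP [n1 n2]; apply: nomax.
  have dis j : j \in S -> disjoint_edges (ends i) (ends j).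
    move=> jS; rewrite disjoint_edgesE; apply/andP; split.
    + by apply: contra n1 => ?; apply/exists_inP; exists j.
    + by apply: contra n2 => ?; apply/exists_inP; exists j.
  have iS : i \notin S by apply/negP => /dis; rewrite disjoint_edgesE /incident !eqxx.
  apply/existsP; exists (i |: S); rewrite properUr ?sub1set // andbT.
  apply/forall_inP => e /setU1P eS; apply/forall_inP => f /setU1P fS; apply/implyP => ef.
  case: eS => [?|eS]; case: fS => [?|fS]; subst.
  + by rewrite eqxx in ef.
  + exact: dis.
  + by rewrite disjoint_edges_sym; apply: dis.
  + by move: mS => /forall_inP /(_ e eS) /forall_inP /(_ f fS) /implyP; apply.
Qed.

Lemma maximal_indicator S : maximal_sel E (indicator_seq S) = is_maximal_matching S.
Proof.
rewrite /maximal_sel /is_maximal_matching matching_indicator.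
by case mS: (is_matching S); rewrite // dominating_indicator.
Qed.

Lemma indicator_seq_inj : injective indicator_seq.
Proof.
move=> S T /(congr1 (fun s => nth false s _)) eqST; apply/setP => i.
by have := eqST i; rewrite !(nth_map i) -?enumT ?size_enum_ord // nth_ord_enum.
Qed.

Lemma perm_bool_seqs_indicator :
  perm_eq (bool_seqs m) [seq indicator_seq X | X <- enum {set 'I_m}].
Proof.
apply: uniq_perm; first exact: uniq_bool_seqs.
  by rewrite map_inj_uniq ?enum_uniq //; exact: indicator_seq_inj.
move=> s; rewrite mem_bool_seqs; apply/eqP/mapP => [sm|[S _ ->]]; last first.
  by rewrite size_map size_enum_ord.
exists [set i : 'I_m | nth false s i]; first by rewrite mem_enum.
apply: (@eq_from_nth _ false); first by rewrite size_map size_enum_ord sm.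
move=> k; rewrite sm => km.
by rewrite (nth_map (Ordinal km)) ?size_enum_ord // inE nth_enum_ord.
Qed.

Lemma Psi_count : Psi E = count (maximal_sel E) (bool_seqs m).
Proof.
rewrite (permP perm_bool_seqs_indicator) count_map /Psi cardsE cardE size_filter -enumT.
by apply: eq_count => S; rewrite /= maximal_indicator.
Qed.

End MaximalMatchingsAsSelections.

Lemma mem_selected E s e : e \in selected E s -> e \in E.
Proof.
elim: E s => [|x E IH] [|b s] //; rewrite /selected /= -/(selected E s) inE.
case: b; rewrite ?inE; last by move=> /IH ->; rewrite orbT.
by case/orP=> [->|/IH ->]; rewrite ?orbT.
Qed.

Lemma selected_cat E1 E2 s1 s2 : size s1 = size E1 ->
  selected (E1 ++ E2) (s1 ++ s2) = selected E1 s1 ++ selected E2 s2.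
Proof. by move=> s1E1; rewrite /selected zip_cat // filter_cat map_cat. Qed.

Lemma covered_cat E1 E2 s1 s2 v : size s1 = size E1 ->
  covered (E1 ++ E2) (s1 ++ s2) v = covered E1 s1 v || covered E2 s2 v.
Proof. by move=> s1E1; rewrite /covered selected_cat // has_cat. Qed.

Definition dominating_off E s a : bool := all (fun e => dominated E s e || incident a e) E.

(* The state of a selection s of E relative to the vertex a at which the next
   hexagon will be glued: 0 = maximal matching covering a, 1 = maximal
   matching avoiding a, 2 = matching avoiding a all of whose undominated
   edges contain a, 3 = a selection that cannot be extended to a maximal
   matching. *)
Definition state E s a : nat :=
  if ~~ (matching_sel E s && dominating_off E s a) then 3
  else if covered E s a then 0 else if dominating_sel E s then 1 else 2.

Lemma dominating_sel_off E s a : dominating_sel E s -> dominating_off E s a.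
Proof. by move=> /allP dom; apply/allP => e eE; rewrite dom. Qed.

Lemma dominating_offE E s a : covered E s a -> dominating_off E s a = dominating_sel E s.
Proof.
move=> cov; apply: eq_all => e; rewrite /dominated /incident.
by case: eqP => [->|_]; case: eqP => [->|_]; rewrite ?cov ?orbT ?orbF.
Qed.

Lemma maximal_sel_state E s a : maximal_sel E s = (state E s a <= 1).
Proof.
rewrite /maximal_sel /state.
case: (boolP (covered E s a)) => [/dominating_offE ->|_]; first by case: (_ && _).
move: (@dominating_sel_off E s a).
by case: (matching_sel E s); case: (dominating_sel E s); case: (dominating_off E s a)
  => // /(_ isT).
Qed.

Definition block_dominated H t (c : bool) a : bool :=
  all (fun h => dominated H t h || c && incident a h) H.

Definition block_dominated_off H t (c : bool) a a' : bool :=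
  all (fun h => [|| dominated H t h, c && incident a h | incident a' h]) H.

(* The state, relative to a', of a selection s ++ t of E ++ H, where H is glued
   to E at a and s has state sg relative to a; the flag c records whether s
   covers a. *)
Definition glue_state sg H t a a' : nat :=
  let c := sg == 0 in
  if ~~ [&& sg < 3, matching_sel H t, ~~ (c && covered H t a),
           covered H t a || (sg <= 1) & block_dominated_off H t c a a'] then 3
  else if covered H t a' then 0 else if block_dominated H t c a then 1 else 2.

Section Gluing.
Variables (E H : seq (nat * nat)) (s t : seq bool) (a a' B : nat).
Hypothesis size_s : size s = size E.
Hypothesis E_le : forall e, e \in E -> (e.1 <= B) && (e.2 <= B).
Hypothesis H_gt : forall h, h \in H -> ((h.1 == a) || (B < h.1)) && ((h.2 == a) || (B < h.2)).
Hypothesis B_lt_a' : B < a'.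

Lemma covered_prefix_gt v : B < v -> covered E s v = false.
Proof.
move=> Bv; apply/negP => /hasP [e /mem_selected /E_le /andP [e1 e2]].
by rewrite /incident => /orP [] /eqP ev; move: Bv; rewrite -ev ltnNge ?e1 ?e2.
Qed.

Lemma covered_prefix v : (v == a) || (B < v) -> covered E s v = (v == a) && covered E s a.
Proof.
case/orP=> [/eqP ->|Bv]; first by rewrite eqxx.
by rewrite covered_prefix_gt //; case: eqP => // va; rewrite -va covered_prefix_gt.
Qed.

Lemma covered_block v : v <= B -> covered H t v = (v == a) && covered H t a.
Proof.
move=> vB; case: (eqVneq v a) => [->//|va]; apply/negP => /hasP [h /mem_selected /H_gt].
case/andP=> h1 h2 /orP [] /eqP hv; subst v.
- by move: h1; rewrite (negbTE va) ltnNge vB.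
- by move: h2; rewrite (negbTE va) ltnNge vB.
Qed.

Lemma incident_prefix_a' e : e \in E -> incident a' e = false.
Proof.
move=> /E_le /andP [e1 e2]; apply/negbTE; rewrite /incident negb_or.
by apply/andP; split; apply/eqP => ea; move: B_lt_a'; rewrite -ea ltnNge ?e1 ?e2.
Qed.

Lemma allrel_disjoint_selected :
  allrel disjoint_edges (selected E s) (selected H t) = ~~ (covered E s a && covered H t a).
Proof.
apply/allrelP/idP => [dis | nboth e h es ht].
  apply/negP => /andP [/hasP [e es ea] /hasP [h ht ha]].
  by move: (dis e h es ht); rewrite disjoint_edgesE; case/orP: ea => /eqP ->; rewrite ha ?andbF.
have /andP [e1 e2] := E_le (mem_selected es).
have at_a v : incident v e -> incident v h -> v <= B -> (v == a) && covered H t a.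
  by move=> ve vh vB; rewrite -covered_block //; apply/hasP; exists h.
have cov_e v : incident v e -> covered E s v by move=> ve; apply/hasP; exists e.
have e_e1 : incident e.1 e by rewrite /incident eqxx.
have e_e2 : incident e.2 e by rewrite /incident eqxx orbT.
rewrite disjoint_edgesE; apply/andP; split; apply/negP => vh.
- have /andP [/eqP ea cHa] := at_a _ e_e1 vh e1.
  by move: nboth; rewrite cHa andbT -ea cov_e.
- have /andP [/eqP ea cHa] := at_a _ e_e2 vh e2.
  by move: nboth; rewrite cHa andbT -ea cov_e.
Qed.

Lemma matching_sel_cat : matching_sel (E ++ H) (s ++ t) =
  [&& matching_sel E s, matching_sel H t & ~~ (covered E s a && covered H t a)].
Proof.
by rewrite /matching_sel selected_cat // pairwise_cat allrel_disjoint_selected andbC -andbA.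
Qed.

Lemma dominated_cat_prefix e : e \in E ->
  dominated (E ++ H) (s ++ t) e = dominated E s e || incident a e && covered H t a.
Proof.
move=> /E_le /andP [e1 e2].
rewrite /dominated !covered_cat // (covered_block e1) (covered_block e2) /incident.
by case: (covered E s e.1) (covered E s e.2) (e.1 == a) (e.2 == a) (covered H t a)
  => [] [] [] [] [].
Qed.

Lemma dominated_cat_block h : h \in H ->
  dominated (E ++ H) (s ++ t) h = dominated H t h || covered E s a && incident a h.
Proof.
move=> /H_gt /andP [h1 h2].
rewrite /dominated !covered_cat // (covered_prefix h1) (covered_prefix h2) /incident.
by case: (covered H t h.1) (covered H t h.2) (h.1 == a) (h.2 == a) (covered E s a)
  => [] [] [] [] [].
Qed.

Let prefix_dominated :=
  if covered H t a then dominating_off E s a else dominating_sel E s.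

Lemma prefix_dominatedE :
  all (fun e => dominated E s e || incident a e && covered H t a) E = prefix_dominated.
Proof.
by rewrite /prefix_dominated; case: (covered H t a); apply: eq_all => e;
  rewrite ?andbT ?andbF ?orbF.
Qed.

Lemma dominating_sel_cat : dominating_sel (E ++ H) (s ++ t) =
  prefix_dominated && block_dominated H t (covered E s a) a.
Proof.
rewrite /dominating_sel all_cat -prefix_dominatedE.
congr (_ && _); apply: eq_in_all => e eEH.
  by rewrite dominated_cat_prefix.
by rewrite dominated_cat_block.
Qed.

Lemma dominating_off_cat : dominating_off (E ++ H) (s ++ t) a' =
  prefix_dominated && block_dominated_off H t (covered E s a) a a'.
Proof.
rewrite /dominating_off all_cat -prefix_dominatedE.
congr (_ && _); apply: eq_in_all => e eEH.
  by rewrite dominated_cat_prefix // incident_prefix_a' // orbF.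
by rewrite dominated_cat_block // orbA.
Qed.

Lemma state_cat : state (E ++ H) (s ++ t) a' = glue_state (state E s a) H t a a'.
Proof.
have cov_a' : covered (E ++ H) (s ++ t) a' = covered H t a'.
  by rewrite covered_cat // covered_prefix_gt.
have off_full c : covered H t a' ==>
    (block_dominated_off H t c a a' == block_dominated H t c a).
  apply/implyP => cHa'; apply/eqP/eq_all => h /=.
  case: (boolP (incident a' h)) => [|_]; last by rewrite orbF.
  by case/orP=> /eqP ha'; rewrite /dominated ha' cHa' ?orbT.
have full_off c : block_dominated H t c a ==> block_dominated_off H t c a a'.
  by apply/implyP => /allP bd; apply/allP => h hH /=; rewrite orbA bd.
rewrite {1}/state matching_sel_cat dominating_sel_cat dominating_off_cat cov_a'.
rewrite /prefix_dominated /glue_state /state.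
case: (boolP (covered E s a)) => [cEa|_].
  rewrite dominating_offE //; move: (off_full true) (full_off true).
  by case: (matching_sel E s); case: (dominating_sel E s); case: (matching_sel H t);
    case: (covered H t a); case: (covered H t a'); case: (block_dominated H t true a);
    case: (block_dominated_off H t true a a').
move: (off_full false) (full_off false) (@dominating_sel_off E s a).
by case: (matching_sel E s); case: (dominating_sel E s); case: (dominating_off E s a);
  case: (matching_sel H t); case: (covered H t a); case: (covered H t a');
  case: (block_dominated H t false a); case: (block_dominated_off H t false a a')
  => // _ _ /(_ isT).
Qed.

End Gluing.

Definition relabel (g : nat -> nat) (e : nat * nat) : nat * nat := (g e.1, g e.2).

Section Relabelling.
Variables (g : nat -> nat) (H : seq (nat * nat)) (t : seq bool).
Hypothesis g_inj : injective g.

Lemma selected_relabel : selected (map (relabel g) H) t = map (relabel g) (selected H t).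
Proof.
elim: H t => [|h H' IH] [|b t'] //; move: (IH t'); rewrite /selected /=.
by case: b => /= ->.
Qed.

Lemma incident_relabel v e : incident (g v) (relabel g e) = incident v e.
Proof. by rewrite /incident /= !(inj_eq g_inj). Qed.

Lemma covered_relabel v : covered (map (relabel g) H) t (g v) = covered H t v.
Proof.
by rewrite /covered selected_relabel has_map; apply: eq_has => e /=; rewrite incident_relabel.
Qed.

Lemma matching_sel_relabel : matching_sel (map (relabel g) H) t = matching_sel H t.
Proof.
rewrite /matching_sel selected_relabel pairwise_map; apply: eq_pairwise => x y.
by rewrite /disjoint_edges /= !(inj_eq g_inj).
Qed.

Lemma dominated_relabel h : dominated (map (relabel g) H) t (relabel g h) = dominated H t h.
Proof. by rewrite /dominated !covered_relabel. Qed.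

Lemma glue_state_relabel sg a a' :
  glue_state sg (map (relabel g) H) t (g a) (g a') = glue_state sg H t a a'.
Proof.
have bd_relabel c : block_dominated (map (relabel g) H) t c (g a) = block_dominated H t c a.
  by rewrite /block_dominated all_map; apply: eq_all => h /=;
    rewrite dominated_relabel incident_relabel.
have bdo_relabel c :
    block_dominated_off (map (relabel g) H) t c (g a) (g a') = block_dominated_off H t c a a'.
  by rewrite /block_dominated_off all_map; apply: eq_all => h /=;
    rewrite dominated_relabel !incident_relabel.
by rewrite /glue_state matching_sel_relabel !covered_relabel bd_relabel bdo_relabel.
Qed.

End Relabelling.

Definition attach (d k : nat) : nat := if k is k'.+1 then 5 * k' + d else 0.

Definition hex_vertex (d k j : nat) : nat := if j == 0 then attach d k else 5 * k + j.

Definition hex_cycle : seq (nat * nat) := [:: (0, 1); (1, 2); (2, 3); (3, 4); (4, 5); (5, 0)].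

Lemma hexagon_relabel d k : hexagon d k = map (relabel (hex_vertex d k)) hex_cycle.
Proof. by rewrite /hexagon /hex_vertex /relabel /= !addnS. Qed.

Lemma attach_le d k : d <= 5 -> attach d k <= 5 * k.
Proof. by case: k => [|k] //= d5; lia. Qed.

Lemma hex_vertex_inj d k : d <= 5 -> injective (hex_vertex d k).
Proof.
move=> d5 x y; have := attach_le k d5; rewrite /hex_vertex.
by case: eqP => [->|x0]; case: eqP => [->|y0] //; lia.
Qed.

Lemma hex_chainS d k : hex_chain d k.+1 = hex_chain d k ++ hexagon d k.
Proof. by rewrite /hex_chain -addn1 iotaD map_cat flatten_cat; congr (_ ++ _); exact: cats0. Qed.

Lemma hex_chain_le d k e : d <= 5 -> e \in hex_chain d k -> (e.1 <= 5 * k) && (e.2 <= 5 * k).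
Proof.
move=> d5; elim: k e => [//|k IH] e; rewrite hex_chainS mem_cat.
case/orP=> [/IH /andP [e1 e2]|]; first by apply/andP; split; lia.
rewrite hexagon_relabel => /mapP [h hC ->] /=.
have vertex_le j : j <= 5 -> hex_vertex d k j <= 5 * k.+1.
  by move=> j5; have := attach_le k d5; rewrite /hex_vertex; case: eqP => _; lia.
have /allP /(_ h hC) /andP [h1 h2] : all (fun h => (h.1 <= 5) && (h.2 <= 5)) hex_cycle by [].
by rewrite !vertex_le.
Qed.

Definition state_count (d k X : nat) : nat :=
  count (fun s => state (hex_chain d k) s (attach d k) == X) (bool_seqs (size (hex_chain d k))).

(* Selections of a hexagon glued at its vertex 0, with next cut vertex d, that
   take state Y to state X. *)
Definition transfer (d X Y : nat) : nat :=
  count (fun t => glue_state Y hex_cycle t 0 d == X) (bool_seqs 6).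

Definition chain_count (d n : nat) : nat := state_count d n 0 + state_count d n 1.

Lemma Psi_chain d n : Psi (hex_chain d n) = chain_count d n.
Proof.
rewrite Psi_count /chain_count -count_predUI.
rewrite (@eq_count _ (predI _ _) pred0) ?count_pred0 ?addn0 => [|s]; last first.
  by rewrite /= andbC; case: eqP => // ->.
by apply: eq_count => s; rewrite (maximal_sel_state _ _ (attach d n)) /=; case: state => [|[]].
Qed.

Lemma state_lt4 E s a : state E s a < 4.
Proof. by rewrite /state; repeat case: ifP. Qed.

Lemma sum_by_value (T : Type) n (h : T -> nat) (F : nat -> nat) (r : seq T) :
  (forall x, h x < n) ->
  \sum_(x <- r) F (h x) = \sum_(i < n) F i * count (fun x => h x == i) r.
Proof.
move=> h_lt; elim: r => [|x r IH]; first by rewrite big_nil big1 // => i _; rewrite muln0.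
have pick_hx : \sum_(i < n) F i * (h x == i) = F (h x).
  rewrite (bigD1 (Ordinal (h_lt x))) //= eqxx muln1 big1 ?addn0 // => i ix.
  case: eqP => [hx|_]; rewrite ?muln0 //.
  by case/eqP: ix; apply: val_inj; rewrite /= hx.
by rewrite big_cons IH -[in LHS]pick_hx -big_split; apply: eq_bigr => i _; rewrite mulnDr.
Qed.

Lemma state_count_S d k X : 0 < d <= 5 ->
  state_count d k.+1 X = \sum_(Y < 4) transfer d X Y * state_count d k Y.
Proof.
case/andP=> d0 d5.
have new_attach : hex_vertex d k d = attach d k.+1.
  by rewrite /hex_vertex /attach; case: eqP => //; lia.
have glue s t : s \in bool_seqs (size (hex_chain d k)) ->
    state (hex_chain d k ++ hexagon d k) (s ++ t) (attach d k.+1) =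
    glue_state (state (hex_chain d k) s (attach d k)) hex_cycle t 0 d.
  rewrite mem_bool_seqs => /eqP size_s.
  rewrite (@state_cat _ _ _ _ (attach d k) _ (5 * k)) //.
  - rewrite hexagon_relabel -new_attach.
    exact: (glue_state_relabel hex_cycle t (@hex_vertex_inj d k d5) _ 0 d).
  - by move=> e; apply: hex_chain_le.
  - have vertex_new j : (hex_vertex d k j == attach d k) || (5 * k < hex_vertex d k j).
      by case: j => [|j]; rewrite /hex_vertex /= ?eqxx //; apply/orP; right; lia.
    by rewrite hexagon_relabel => _ /mapP [h _ ->]; rewrite !vertex_new.
  - by rewrite -new_attach /hex_vertex; case: eqP => //; lia.
rewrite /state_count hex_chainS size_cat count_sum sum_bool_seqs_cat.
rewrite -(@sum_by_value _ _ (fun s => state (hex_chain d k) s (attach d k)) (transfer d X));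
  last by move=> s; apply: state_lt4.
rewrite big_seq [RHS]big_seq; apply: eq_bigr => s s_in.
by rewrite /transfer count_sum; apply: eq_bigr => t _; rewrite glue.
Qed.

Lemma transfer_from_dead d X : X != 3 -> transfer d X 3 = 0.
Proof.
move=> X3; apply/eqP; rewrite -leqn0 leqNgt -has_count.
by apply/hasPn => t _; rewrite /glue_state eq_sym.
Qed.

Lemma state_count_step d k X : 0 < d <= 5 -> X < 3 ->
  state_count d k.+1 X = \sum_(Y < 3) transfer d X Y * state_count d k Y.
Proof.
move=> d05 X3; rewrite state_count_S // big_ord_recr /= transfer_from_dead ?addn0 //.
by rewrite neq_ltn X3.
Qed.

Local Open Scope ring_scope.

Section ThreeStateRecurrence.
Variable R : comPzRingType.

Definition trace3 (A : nat -> nat -> R) : R := A 0 0 + A 1 1 + A 2 2.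

Definition minors3 (A : nat -> nat -> R) : R :=
  (A 0 0 * A 1 1 - A 0 1 * A 1 0) + (A 0 0 * A 2 2 - A 0 2 * A 2 0)
  + (A 1 1 * A 2 2 - A 1 2 * A 2 1).

Definition det3 (A : nat -> nat -> R) : R :=
  A 0 0 * (A 1 1 * A 2 2 - A 1 2 * A 2 1) - A 0 1 * (A 1 0 * A 2 2 - A 1 2 * A 2 0)
  + A 0 2 * (A 1 0 * A 2 1 - A 1 1 * A 2 0).

Variables (A x : nat -> nat -> R).
Hypothesis x_step : forall k j, (j < 3)%N -> x k.+1 j = \sum_(i < 3) A j i * x k i.

(* Cayley-Hamilton for the 3 x 3 matrix A, applied along the orbit x. *)
Lemma linear_functional_rec3 (w : nat -> R) k (u := fun n => \sum_(j < 3) w j * x n j) :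
  u k.+3 = trace3 A * u k.+2 - minors3 A * u k.+1 + det3 A * u k.
Proof.
have xS n j : (j < 3)%N -> x n.+1 j = A j 0 * x n 0 + A j 1 * x n 1 + A j 2 * x n 2.
  by move=> j3; rewrite x_step // !big_ord_recr big_ord0 /= add0r.
rewrite /u !big_ord_recr !big_ord0 /= !add0r.
rewrite !(xS k.+2) // !(xS k.+1) // !(xS k) //.
by rewrite /trace3 /minors3 /det3; ring.
Qed.

End ThreeStateRecurrence.

Definition transfer_matrix (d : nat) : nat -> nat -> int := fun j i => (transfer d j i)%:Z.

Lemma chain_count_rec d k : (0 < d <= 5)%N ->
  (chain_count d k.+3)%:Z =
    trace3 (transfer_matrix d) * (chain_count d k.+2)%:Z
    - minors3 (transfer_matrix d) * (chain_count d k.+1)%:Z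
    + det3 (transfer_matrix d) * (chain_count d k)%:Z.
Proof.
move=> d05.
have step n j : (j < 3)%N -> (state_count d n.+1 j)%:Z =
    \sum_(i < 3) transfer_matrix d j i * (state_count d n i)%:Z.
  move=> j3; rewrite state_count_step // -natz natr_sum.
  by apply: eq_bigr => i _; rewrite natrM !natz.
have chainE n : (chain_count d n)%:Z = \sum_(j < 3) (j < 2)%N%:R * (state_count d n j)%:Z.
  by rewrite !big_ord_recr big_ord0 /= !mul1r mul0r add0r addr0.
have := linear_functional_rec3 (x := fun n j => (state_count d n j)%:Z) step
  (fun j => (j < 2)%N%:R) k.
by rewrite /= -!chainE.
Qed.

Lemma ogf_eq_ratio_rec3 (a : nat -> int) (N D : {poly int}) :
  D`_0 = 1 -> (forall j, D`_j.+4 = 0) -> (forall j, N`_j.+3 = 0) ->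
  N`_0 = a 0%N -> N`_1 = a 1%N + D`_1 * a 0%N ->
  N`_2 = a 2%N + D`_1 * a 1%N + D`_2 * a 0%N ->
  (forall k, a k.+3 + D`_1 * a k.+2 + D`_2 * a k.+1 + D`_3 * a k = 0) ->
  ogf_eq_ratio a N D.
Proof.
move=> D0 D4 N3 N0 N1 N2 a_rec; split=> // n.
rewrite /fps_mul_poly_coef -(big_mkord xpredT (fun i => D`_i * a (n - i)%N)).
case: n => [|[|[|k]]].
- by rewrite big_nat_recl // big_geq // addr0 D0 mul1r subn0.
- by rewrite !big_nat_recl // big_geq // addr0 D0 mul1r N1 addrC.
- by rewrite !big_nat_recl // big_geq // addr0 D0 mul1r N2 !addrA; congr (_ + _); rewrite addrC.
rewrite !big_nat_recl // big1 ?addr0 => [|i _]; last by rewrite D4 mul0r.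
by rewrite N3 D0 mul1r !subSS !subn0 !addrA a_rec.
Qed.

Lemma ogf_eq_ratio_ext (a b : nat -> int) (N D : {poly int}) :
  a =1 b -> ogf_eq_ratio a N D -> ogf_eq_ratio b N D.
Proof.
move=> ab [D0 aND]; split=> // n; rewrite -aND /fps_mul_poly_coef.
by apply: eq_bigr => i _; rewrite ab.
Qed.

Lemma chain_ogf d (tr s2 dt c1 c2 : int) (N D : {poly int}) : (0 < d <= 5)%N ->
  trace3 (transfer_matrix d) = tr -> minors3 (transfer_matrix d) = s2 ->
  det3 (transfer_matrix d) = dt ->
  (chain_count d 1)%:Z = c1 -> (chain_count d 2)%:Z = c2 ->
  D`_0 = 1 -> D`_1 = - tr -> D`_2 = s2 -> D`_3 = - dt -> (forall j, D`_j.+4 = 0) ->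
  N`_0 = 1 -> N`_1 = c1 - tr -> N`_2 = c2 - tr * c1 + s2 -> (forall j, N`_j.+3 = 0) ->
  ogf_eq_ratio (fun n => (chain_count d n)%:Z) N D.
Proof.
move=> d05 trE s2E dtE c1E c2E D0 D1 D2 D3 D4 N0 N1 N2 N3.
have c0 : chain_count d 0 = 1%N by [].
apply: ogf_eq_ratio_rec3; rewrite ?c0 ?c1E ?c2E ?D1 ?D2 //.
- by rewrite N1 mulr1.
- by rewrite N2 mulr1 mulNr.
by move=> k; rewrite D3 chain_count_rec // trE s2E dtE; ring.
Qed.

Lemma p_seq_chain n : (p_seq n)%:Z = (chain_count 3 n)%:Z.
Proof. by case: n => [|n]; rewrite /p_seq ?Psi_chain. Qed.

Lemma m_seq_chain n : (m_seq n)%:Z = (chain_count 2 n)%:Z.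
Proof. by case: n => [|n]; rewrite /m_seq ?Psi_chain. Qed.

Lemma o_seq_chain n : (o_seq n)%:Z = (chain_count 1 n)%:Z.
Proof. by case: n => [|n]; rewrite /o_seq ?Psi_chain. Qed.

Lemma ogf_para : ogf_eq_ratio (fun n => (p_seq n)%:Z)
  (1 + 4%:R *: 'X^2) (1 - 5%:R *: 'X + 4%:R *: 'X^2 - 4%:R *: 'X^3).
Proof.
apply: (ogf_eq_ratio_ext (fun n => esym (p_seq_chain n))).
apply: (@chain_ogf 3 5 4 4 5 25).
1: by [].
1-5: by vm_compute.
all: try move=> j; rewrite !coefE /=; lia.
Qed.

Lemma ogf_meta : ogf_eq_ratio (fun n => (m_seq n)%:Z)
  (1 - 'X - 2%:R *: 'X^2) (1 - 6%:R *: 'X + 3%:R *: 'X^2 - 2%:R *: 'X^3).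
Proof.
apply: (ogf_eq_ratio_ext (fun n => esym (m_seq_chain n))).
apply: (@chain_ogf 2 6 3 2 5 25).
1: by [].
1-5: by vm_compute.
all: try move=> j; rewrite !coefE /=; lia.
Qed.

Lemma ogf_ortho : ogf_eq_ratio (fun n => (o_seq n)%:Z)
  (1 + 'X + 'X^2) (1 - 4%:R *: 'X - 4%:R *: 'X^2 - 'X^3).
Proof.
apply: (ogf_eq_ratio_ext (fun n => esym (o_seq_chain n))).
apply: (@chain_ogf 1 4 (-4) 1 5 25).
1: by [].
1-5: by vm_compute.
all: try move=> j; rewrite !coefE /=; lia.
Qed.

Theorem theorem3p4 :
  ogf_eq_ratio (fun n => (p_seq n)%:Z)
    (1 + 4%:R *: 'X^2) (1 - 5%:R *: 'X + 4%:R *: 'X^2 - 4%:R *: 'X^3) /\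
  ogf_eq_ratio (fun n => (m_seq n)%:Z)
    (1 - 'X - 2%:R *: 'X^2) (1 - 6%:R *: 'X + 3%:R *: 'X^2 - 2%:R *: 'X^3) /\
  ogf_eq_ratio (fun n => (o_seq n)%:Z)
    (1 + 'X + 'X^2) (1 - 4%:R *: 'X - 4%:R *: 'X^2 - 'X^3).
Proof. exact: (conj ogf_para (conj ogf_meta ogf_ortho)). Qed.
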